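(* Let $u$ be a minimizer of the problem $\min f(x)$ s.t. $G(x)\succeq 0$, and suppose the nondegeneracy condition, the strict complementarity condition and the second order sufficient condition hold at $u$. Then there exists $\Theta \in \mathcal{S}^{m-r}$ such that \[ \nabla L^{re}(u) = 0, \qquad \Theta \succeq 0,\quad T(u)\succeq 0, \qquad \langle \Theta, T(u)\rangle = 0, \] where $L^{re}(x) := f(x) - \langle \Theta, T(x)\rangle$. Furthermore: (i) the linear mapping $\nabla T(u)$ is regular, i.e. $\ker \nabla T(u)^* = \{0\}\subset \mathcal{S}^{m-r}$; (ii) $\Theta \succ 0$; (iii) for all $0 \neq h \in \ker \nabla T(u)$, $h^T \nabla^2 L^{re}(u)\, h > 0$.
   Context: Let $f\in\mathbb{R}[x]$, $x=(x_1,\dots,x_n)$, and let $G(x)$ be an $m\times m$ symmetric polynomial matrix; consider $\min f(x)$ s.t. $G(x)\succeq 0$. $\mathcal{S}^k$ denotes the $k\times k$ real symmetric matrices. For a matrix polynomial $F$, $\nabla F(x)[d]=\sum_i d_i \nabla_{x_i}F(x)$ and its adjoint is $\nabla F(x)^*[X]=(\langle \nabla_{x_1}F(x),X\rangle,\dots,\langle \nabla_{x_n}F(x),X\rangle)^T$. Nondegeneracy condition at feasible $u$: $\operatorname{Im}\nabla G(u) + \{N\in\mathcal{S}^m : E^TNE=0\} = \mathcal{S}^m$, where the columns of $E$ form a basis of $\ker G(u)$. Under it there is a unique $\Lambda\in\mathcal{S}^m$ with $\nabla f(u)-\nabla G(u)^*[\Lambda]=0$, $\Lambda\succeq 0$,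 $G(u)\succeq0$, $\langle\Lambda,G(u)\rangle=0$. Strict complementarity condition: $\operatorname{rank}G(u)+\operatorname{rank}\Lambda=m$. Second order sufficient condition: $h^T(\nabla^2 L(u,\Lambda)+H(u,\Lambda))h>0$ for all nonzero $h\in\{h\in\mathbb{R}^n:\sum_i h_i E^T\nabla_{x_i}G(u)E=0\}$, where $L(x,\Lambda)=f(x)-\langle\Lambda,G(x)\rangle$ and $H(x,Q)_{ij}=2\langle Q,\nabla_{x_i}G(x)\,G(x)^{\dagger}\,\nabla_{x_j}G(x)\rangle$ ($\dagger$ = Moore–Penrose inverse). Let $r=\operatorname{rank}G(u)$. Up to a permutation of rows and columns write $G=\begin{bmatrix}A & B\\ B^T & C\end{bmatrix}$ with $A\in\mathcal{S}^r\mathbb{R}[x]$ and $\operatorname{rank}A(u)=r$. Set $p(x)=\det A(x)$, $S(x)=C(x)-B(x)^TA(x)^{-1}B(x)$ (Schur complement, defined near $u$), and $T(x)=p(x)^2S(x)$, which is an $(m-r)\times(m-r)$ symmetric polynomial matrix (since $pA^{-1}$ is the adjugate of $A$), with $T(u)=0$; near $u$, $G(x)\succeq0$ iff $T(x)\succeq0$. *)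

From HB Require Import structures.
From mathcomp Require Import all_boot all_order all_algebra all_fingroup.
From mathcomp Require Import reals.
From mathcomp Require Import mpoly.
Set Implicit Arguments. Unset Strict Implicit. Unset Printing Implicit Defensive.
Import Order.TTheory GRing.Theory Num.Theory.
Local Open Scope ring_scope.

Section PMO.
Variables (R : realType) (n : nat).

Definition frob (p q : nat) (X Y : 'M[R]_(p, q)) : R := \tr (X^T *m Y).

Definition psd (m : nat) (A : 'M[R]_m) : Prop :=
  A^T = A /\ forall v : 'cV[R]_m, 0 <= (v^T *m A *m v) 0 0.
Definition pd (m : nat) (A : 'M[R]_m) : Prop :=
  A^T = A /\ forall v : 'cV[R]_m, v != 0 -> 0 < (v^T *m A *m v) 0 0.

Definition is_MP_inverse (p q : nat) (A : 'M[R]_(p, q)) (X : 'M[R]_(q, p)) : Prop :=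
  [/\ A *m X *m A = A, X *m A *m X = X, (A *m X)^T = A *m X & (X *m A)^T = X *m A].

Definition evalmx (p q : nat) (x : 'I_n -> R) (M : 'M[{mpoly R[n]}]_(p, q)) : 'M[R]_(p, q) :=
  map_mx (meval x) M.

Definition dmx (p q : nat) (i : 'I_n) (M : 'M[{mpoly R[n]}]_(p, q)) : 'M[{mpoly R[n]}]_(p, q) :=
  map_mx (mderiv i) M.

Definition grad (f : {mpoly R[n]}) (x : 'I_n -> R) : 'cV[R]_n :=
  \col_i meval x (mderiv i f).

Definition hess (f : {mpoly R[n]}) (x : 'I_n -> R) : 'M[R]_n :=
  \matrix_(i, j) meval x (mderiv j (mderiv i f)).

Definition Dmx (p : nat) (F : 'M[{mpoly R[n]}]_p) (x : 'I_n -> R) (d : 'cV[R]_n) : 'M[R]_p :=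
  \sum_i d i 0 *: evalmx x (dmx i F).

Definition Dmx_adj (p : nat) (F : 'M[{mpoly R[n]}]_p) (x : 'I_n -> R) (X : 'M[R]_p) : 'cV[R]_n :=
  \col_i frob (evalmx x (dmx i F)) X.

Definition hessL (p : nat) (f : {mpoly R[n]}) (F : 'M[{mpoly R[n]}]_p) (x : 'I_n -> R)
  (Q : 'M[R]_p) : 'M[R]_n :=
  hess f x - \matrix_(i, j) frob Q (evalmx x (dmx j (dmx i F))).

(* H(x,Q)_{ij} = 2 <Q, nabla_{x_i}F(x) F(x)^dagger nabla_{x_j}F(x)>, Fdag = F(x)^dagger *)
Definition Hterm (p : nat) (F : 'M[{mpoly R[n]}]_p) (x : 'I_n -> R) (Q Fdag : 'M[R]_p)
  : 'M[R]_n :=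
  \matrix_(i, j) (2 * frob Q (evalmx x (dmx i F) *m Fdag *m evalmx x (dmx j F))).

Definition feasible (p : nat) (F : 'M[{mpoly R[n]}]_p) (x : 'I_n -> R) : Prop :=
  psd (evalmx x F).
Definition is_minimizer (p : nat) (f : {mpoly R[n]}) (F : 'M[{mpoly R[n]}]_p)
  (u : 'I_n -> R) : Prop :=
  feasible F u /\ forall x, feasible F x -> meval u f <= meval x f.

(* columns of E form a basis of ker A (column kernel A v = 0) *)
Definition ker_basis (p d : nat) (A : 'M[R]_p) (E : 'M[R]_(p, d)) : Prop :=
  row_free E^T /\ (E^T == kermx A^T)%MS.

Definition nondegeneracy_cond (p d : nat) (F : 'M[{mpoly R[n]}]_p) (u : 'I_n -> R)
  (E : 'M[R]_(p, d)) : Prop :=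
  forall X : 'M[R]_p, X^T = X ->
    exists (dd : 'cV[R]_n) (N : 'M[R]_p),
      [/\ N^T = N, E^T *m N *m E = 0 & X = Dmx F u dd + N].

Definition KKT (p : nat) (f : {mpoly R[n]}) (F : 'M[{mpoly R[n]}]_p) (u : 'I_n -> R)
  (Lam : 'M[R]_p) : Prop :=
  [/\ Lam^T = Lam, grad f u - Dmx_adj F u Lam = 0, psd Lam, psd (evalmx u F)
    & frob Lam (evalmx u F) = 0].

Definition strict_compl (p : nat) (F : 'M[{mpoly R[n]}]_p) (u : 'I_n -> R)
  (Lam : 'M[R]_p) : Prop :=
  (\rank (evalmx u F) + \rank Lam)%N = p.

Definition SOSC (p d : nat) (f : {mpoly R[n]}) (F : 'M[{mpoly R[n]}]_p) (u : 'I_n -> R)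
  (Lam : 'M[R]_p) (E : 'M[R]_(p, d)) (Fdag : 'M[R]_p) : Prop :=
  forall h : 'cV[R]_n, h != 0 ->
    \sum_i h i 0 *: (E^T *m evalmx u (dmx i F) *m E) = 0 ->
    0 < (h^T *m (hessL f F u Lam + Hterm F u Lam Fdag) *m h) 0 0.

Definition symperm (p : nat) (s : 'S_p) (G : 'M[{mpoly R[n]}]_p) : 'M[{mpoly R[n]}]_p :=
  \matrix_(i, j) G (s i) (s j).

(* T = p^2 (C - B^T A^{-1} B) = det(A)^2 C - det(A) B^T adj(A) B,
   where s G s^T = [A B; B^T C] with A of size r *)
Definition Tmx (r k : nat) (s : 'S_(r + k)) (G : 'M[{mpoly R[n]}]_(r + k))
  : 'M[{mpoly R[n]}]_k :=
  let Gp := symperm s G in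
  let A := ulsubmx Gp in let B := ursubmx Gp in let C := drsubmx Gp in
  (\det A) ^+ 2 *: C - \det A *: (B^T *m \adj A *m B).

End PMO.

From HB Require Import structures.
From mathcomp Require Import all_boot all_order all_algebra all_fingroup.
From mathcomp Require Import reals.
From mathcomp Require Import mpoly.
From mathcomp Require Import ring lra.
Set Implicit Arguments. Unset Strict Implicit. Unset Printing Implicit Defensive.
Import Order.TTheory GRing.Theory Num.Theory.
Local Open Scope ring_scope.

(* After the permutation s, G = [A B; B^T C] with A(u) invertible.  The polynomial
   matrix W = [-adj(A) B; det(A) I] satisfies G W = [0; U] with
   U = det(A) C - B^T adj(A) B, hence W^T G W = det(A) U = T.  Since rank G(u) = rank A(u),
   U(u) = 0, so the columns of V = W(u) span ker G(u); differentiating W^T G W at u gives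
   dT(u) = V^T dG(u) V, and along a direction h with dT(u)[h] = 0 the second derivative
   picks up the extra term -2 Q^T G(u) Q, where dG(u)[h] V = -G(u) Q.
   Complementarity forces Lam = V Theta V^T with Theta = L Lam L^T for a left inverse L of V.
   The KKT system for T is then the one for G, regularity of dT(u) is nondegeneracy,
   Theta > 0 is strict complementarity (rank Theta = rank Lam = m - r), and the second order
   condition for T is the one for G, the curvature term -2 Q^T G(u) Q matching H(u, Lam). *)

Section Frobenius.
Variable R : realType.

Lemma frobC p q (X Y : 'M[R]_(p, q)) : frob X Y = frob Y X.
Proof. by rewrite /frob -mxtrace_tr trmx_mul trmxK. Qed.

Lemma frob_self_eq0 p q (X : 'M[R]_(p, q)) : frob X X = 0 -> X = 0.
Proof.
have sq_ge0 (x : R) : 0 <= x * x by rewrite -expr2 sqr_ge0.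
have -> : frob X X = \sum_i \sum_j X i j * X i j.
  rewrite /frob /mxtrace exchange_big; apply: eq_bigr => j _; rewrite mxE.
  by apply: eq_bigr => i _; rewrite mxE.
move=> /eqP; rewrite psumr_eq0 => [/allP X0|i _]; last exact: sumr_ge0.
apply/matrixP => i j; move: (X0 i (mem_index_enum _)).
rewrite psumr_eq0 => [/allP/(_ j (mem_index_enum _))|l _]; last exact: sq_ge0.
by rewrite mulf_eq0 orbb mxE => /eqP.
Qed.

Lemma frobDr p q (X Y Z : 'M[R]_(p, q)) : frob X (Y + Z) = frob X Y + frob X Z.
Proof. by rewrite /frob mulmxDr mxtraceD. Qed.

Lemma frobZr p q (X Y : 'M[R]_(p, q)) c : frob X (c *: Y) = c * frob X Y.
Proof. by rewrite /frob -scalemxAr mxtraceZ. Qed.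

Lemma frobNr p q (X Y : 'M[R]_(p, q)) : frob X (- Y) = - frob X Y.
Proof. by rewrite /frob mulmxN raddfN. Qed.

Lemma frob0r p q (X : 'M[R]_(p, q)) : frob X 0 = 0.
Proof. by rewrite /frob mulmx0 raddf0. Qed.

Lemma frob_sumr p q (X : 'M[R]_(p, q)) (I : finType) (F : I -> 'M[R]_(p, q)) :
  frob X (\sum_i F i) = \sum_i frob X (F i).
Proof. by rewrite /frob mulmx_sumr raddf_sum. Qed.

Lemma frob_sandwich a b (V : 'M[R]_(a, b)) X Y :
  frob (V^T *m X *m V) Y = frob X (V *m Y *m V^T).
Proof. by rewrite /frob !trmx_mul !trmxK -!mulmxA mxtrace_mulC !mulmxA. Qed.

End Frobenius.

Section Semidefinite.
Variable R : realType.

Lemma qform_sym m (M : 'M[R]_m) (v w : 'cV[R]_m) :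
  M^T = M -> (v^T *m M *m w) 0 0 = (w^T *m M *m v) 0 0.
Proof.
move=> MT; have -> : (v^T *m M *m w) 0 0 = (v^T *m M *m w)^T 0 0 by rewrite [RHS]mxE.
by rewrite !trmx_mul trmxK MT mulmxA.
Qed.

Lemma qform_shift m (M : 'M[R]_m) (v w : 'cV[R]_m) (t : R) :
  ((v + t *: w)^T *m M *m (v + t *: w)) 0 0 =
  (v^T *m M *m v) 0 0 + t * (v^T *m M *m w) 0 0 + t * (w^T *m M *m v) 0 0
  + t ^+ 2 * (w^T *m M *m w) 0 0.
Proof.
have -> : (v + t *: w)^T = v^T + t *: w^T by apply/matrixP => i j; rewrite !mxE.
rewrite !mulmxDl !mulmxDr.
by rewrite -!(scalemxAl t) -!(scalemxAr t) !mxE; ring.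
Qed.

Lemma psd_qform_eq0 m (M : 'M[R]_m) (v : 'cV[R]_m) :
  psd M -> (v^T *m M *m v) 0 0 = 0 -> M *m v = 0.
Proof.
move=> [MT M_ge0] v0.
suff Mv_orth (w : 'cV[R]_m) : (w^T *m M *m v) 0 0 = 0.
  by apply: frob_self_eq0; rewrite /frob trace_mx11 mulmxA Mv_orth.
set b := (w^T *m M *m v) 0 0; set c := (w^T *m M *m w) 0 0.
have c_ge0 : 0 <= c by apply: M_ge0.
(* the quadratic t |-> 2 t b + t^2 c stays nonnegative only if b = 0 *)
have := M_ge0 (v + (- b / (c + 1)) *: w).
rewrite qform_shift v0 (qform_sym _ _ MT) -/b -/c.
have -> : 0 + - b / (c + 1) * b + - b / (c + 1) * b + (- b / (c + 1)) ^+ 2 * c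
          = - (b ^+ 2 * (c + 2)) / (c + 1) ^+ 2.
  by field; rewrite gt_eqF // ltr_wpDl.
rewrite pmulr_lge0 ?invr_gt0 ?exprn_gt0 ?ltr_wpDl // => b_le0.
by apply/eqP; rewrite -sqrf_eq0 eq_le sqr_ge0 andbT; nra.
Qed.

Lemma psd_first_col0 m (N : 'M[R]_(1 + m)) :
  psd N -> N *m col_mx 1%:M 0 = 0 ->
  N = block_mx 0 0 0 (drsubmx N) /\ psd (drsubmx N).
Proof.
move=> [NT N_ge0] Ne0.
have [ul0 dl0] : ulsubmx N = 0 /\ dlsubmx N = 0.
  move: Ne0; rewrite -[in LHS](submxK N) mul_block_col !mulmx1 !mulmx0 !addr0.
  by rewrite -col_mx0 => /eq_col_mx.
have ur0 : ursubmx N = 0 by rewrite -[N in ursubmx N]NT -trmx_dlsub dl0 trmx0.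
have NE : N = block_mx 0 0 0 (drsubmx N) by rewrite -[N in LHS]submxK ul0 dl0 ur0.
split=> //; split; first by rewrite trmx_drsub NT.
move=> v; have := N_ge0 (col_mx 0 v).
rewrite [in X in X -> _]NE tr_col_mx trmx0 mul_row_block !mulmx0 !addr0 !add0r.
by rewrite mul_row_col mulmx0 add0r.
Qed.

Lemma psd_rank1_peel m (M : 'M[R]_(1 + m)) : psd M ->
  exists x : 'cV[R]_(1 + m), psd (M - x *m x^T) /\ (M - x *m x^T) *m col_mx 1%:M 0 = 0.
Proof.
move=> [MT M_ge0]; pose e0 : 'cV[R]_(1 + m) := col_mx 1%:M 0.
pose c := M *m e0; pose a := (e0^T *m M *m e0) 0 0.
have a_ge0 : 0 <= a by apply: M_ge0.
have cTe0 : c^T *m e0 = a%:M.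
  by apply/matrixP => i j; rewrite !ord1 [RHS]mxE mulr1n trmx_mul MT.
pose x := Num.sqrt a^-1 *: c; exists x.
have xxT : x *m x^T = a^-1 *: (c *m c^T).
  rewrite /x linearZ /= -scalemxAl -scalemxAr scalerA -expr2.
  by rewrite sqr_sqrtr // invr_ge0.
split; last first.
  rewrite mulmxBl xxT -scalemxAl -mulmxA cTe0 mul_mx_scalar scalerA -/c.
  have [a0|a_neq0] := eqVneq a 0; last by rewrite mulVf // scale1r subrr.
  by rewrite [c](psd_qform_eq0 (conj MT M_ge0) a0) scaler0 subr0.
split=> [|v]; first by rewrite linearB /= trmx_mul trmxK MT.
have [a0|a_neq0] := eqVneq a 0.
  by rewrite xxT a0 invr0 scale0r subr0; apply: M_ge0.
pose b := (c^T *m v) 0 0.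
have e0Mv : (e0^T *m M *m v) 0 0 = b by rewrite /b /c trmx_mul MT.
have vMe0 : (v^T *m M *m e0) 0 0 = b by rewrite (qform_sym _ _ MT).
have -> : (v^T *m (M - x *m x^T) *m v) 0 0 = (v^T *m M *m v) 0 0 - a^-1 * b ^+ 2.
  have vc : (v^T *m c) 0 0 = b by rewrite /c mulmxA vMe0.
  rewrite mulmxBr mulmxBl xxT -scalemxAr -scalemxAl.
  have -> : v^T *m (c *m c^T) *m v = (v^T *m c) *m (c^T *m v) by rewrite !mulmxA.
  by rewrite !mxE big_ord1 vc expr2.
have := M_ge0 (v + (- (b / a)) *: e0); rewrite qform_shift vMe0 e0Mv -/a.
by move/le_trans; apply; rewrite le_eqVlt; apply/orP; left; apply/eqP; field.
Qed.

Lemma psd_factor m (M : 'M[R]_m) : psd M -> exists Q : 'M[R]_m, M = Q *m Q^T.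
Proof.
elim: m M => [|m IHm]; first by exists 0; apply/matrixP => -[].
change (forall M : 'M[R]_(1 + m), psd M -> exists Q : 'M_(1 + m), M = Q *m Q^T).
move=> M /psd_rank1_peel[x [psdN Ne0]].
have [NE /IHm[Q' Q'E]] := psd_first_col0 psdN Ne0.
exists (row_mx x (col_mx (0 : 'M_(1, m)) Q')).
rewrite tr_row_mx mul_row_col tr_col_mx trmx0 mul_col_row !mulmx0 !mul0mx.
by rewrite -Q'E -NE addrC subrK.
Qed.

Lemma psd_frob_eq0_mul m (L G : 'M[R]_m) :
  psd L -> psd G -> frob L G = 0 -> G *m L = 0.
Proof.
move=> psdL psdG LG0; have [Q QE] := psd_factor psdL.
have qGq j : ((col j Q)^T *m G *m col j Q) 0 0 = (Q^T *m G *m Q) j j.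
  rewrite !mxE; apply: eq_bigr => i _; rewrite !mxE; congr (_ * _).
  by apply: eq_bigr => l _; rewrite !mxE.
have : \sum_j ((col j Q)^T *m G *m col j Q) 0 0 = 0.
  under eq_bigr do rewrite qGq.
  by apply: etrans LG0; rewrite /frob psdL.1 QE -[in RHS]mulmxA mxtrace_mulC.
move=> /eqP; rewrite psumr_eq0 => [/allP qGq0|j _]; last exact: psdG.2.
have GQ : G *m Q = 0.
  apply: trmx_inj; apply/row_matrixP => j.
  rewrite trmx0 row0 trmx_mul row_mul -tr_col -trmx_mul.
  by rewrite (psd_qform_eq0 psdG (eqP (qGq0 j (mem_index_enum _)))) trmx0.
by rewrite QE mulmxA GQ mul0mx.
Qed.

Lemma psd0 m : psd (0 : 'M[R]_m).
Proof. by split=> [|v]; rewrite ?trmx0 // mulmx0 mul0mx mxE. Qed.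

Lemma psd_congr m p (A : 'M[R]_(p, m)) (M : 'M[R]_m) : psd M -> psd (A *m M *m A^T).
Proof.
move=> [MT M_ge0]; split=> [|v]; first by rewrite !trmx_mul trmxK MT mulmxA.
by have := M_ge0 (A^T *m v); rewrite trmx_mul trmxK !mulmxA.
Qed.

Lemma psd_unitmx_pd m (M : 'M[R]_m) : psd M -> M \in unitmx -> pd M.
Proof.
move=> psdM Mu; split=> [|v v_neq0]; first exact: psdM.1.
rewrite lt_def psdM.2 andbT; apply: contraNneq v_neq0 => /(psd_qform_eq0 psdM) Mv0.
by rewrite -(mulKmx Mu v) Mv0 mulmx0.
Qed.

End Semidefinite.

Section MatrixDerivation.
Variable S : comNzRingType.

Definition derivation (d : S -> S) := forall x y, d (x * y) = d x * y + x * d y.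

Variables (d : {additive S -> S}) (dM : derivation d).

Lemma map_mx_derM a b c (A : 'M[S]_(a, b)) (B : 'M[S]_(b, c)) :
  map_mx d (A *m B) = map_mx d A *m B + A *m map_mx d B.
Proof.
apply/matrixP => i j; rewrite !mxE raddf_sum -big_split.
by apply: eq_bigr => l _; rewrite dM !mxE.
Qed.

Lemma map_mx_derZ a b (x : S) (A : 'M[S]_(a, b)) :
  map_mx d (x *: A) = d x *: A + x *: map_mx d A.
Proof. by apply/matrixP => i j; rewrite !mxE dM. Qed.

Lemma map_mx_der2M a b c (A : 'M[S]_(a, b)) (B : 'M[S]_(b, c)) :
  map_mx d (map_mx d (A *m B)) = map_mx d (map_mx d A) *m B
    + 2%:R *: (map_mx d A *m map_mx d B) + A *m map_mx d (map_mx d B).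
Proof. by rewrite map_mx_derM map_mxD !map_mx_derM scaler_nat mulr2n !addrA. Qed.

End MatrixDerivation.

Section SchurNullmx.
Variables (S : comNzRingType) (r k : nat).
Implicit Type M : 'M[S]_(r + k).

(* For M = [A B; B^T C]: schur_adj M = det(A) (C - B^T A^-1 B), without inverting A *)
Definition schur_adj M : 'M[S]_k :=
  \det (ulsubmx M) *: drsubmx M - (ursubmx M)^T *m \adj (ulsubmx M) *m ursubmx M.

Definition schur_nullmx M : 'M[S]_(r + k, k) :=
  col_mx (- (\adj (ulsubmx M) *m ursubmx M)) (\det (ulsubmx M))%:M.

Lemma mul_schur_nullmx M : M^T = M -> M *m schur_nullmx M = col_mx 0 (schur_adj M).
Proof.
move=> MT; have dlM : dlsubmx M = (ursubmx M)^T by rewrite trmx_ursub MT.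
rewrite /schur_nullmx /schur_adj -{1}(submxK M) mul_block_col dlM.
rewrite !mulmxN mulmxA mul_mx_adj mul_scalar_mx mul_mx_scalar addNr.
by rewrite mul_mx_scalar mulmxA addrC.
Qed.

Lemma schur_nullmx_congr M : M^T = M ->
  (schur_nullmx M)^T *m (M *m schur_nullmx M) = \det (ulsubmx M) *: schur_adj M.
Proof.
move=> MT; rewrite mul_schur_nullmx // tr_col_mx mul_row_col mulmx0 add0r.
by rewrite tr_scalar_mx mul_scalar_mx.
Qed.

End SchurNullmx.

Lemma schur_adj_eq0 (K : fieldType) r k (M : 'M[K]_(r + k)) :
  M^T = M -> \rank M = r -> ulsubmx M \in unitmx -> schur_adj M = 0.
Proof.
move=> MT rkM Au.
have /andP[uM dM] : (usubmx M <= M)%MS && (dsubmx M <= M)%MS.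
  by rewrite -col_mx_sub vsubmxK submx_refl.
have rk_u : \rank (usubmx M) = r.
  apply/eqP; rewrite eqn_leq; apply/andP; split.
    by rewrite -[X in (_ <= X)%N]rkM mxrankS.
  rewrite -[X in (X <= _)%N](mxrank_unit Au).
  have -> : ulsubmx M = usubmx M *m col_mx 1%:M 0.
    by rewrite -[usubmx M]hsubmxK mul_row_col mulmx1 mulmx0 addr0.
  exact: mxrankM_maxl.
have Mu : (M <= usubmx M)%MS by rewrite -(mxrank_leqif_sup uM).2 rk_u rkM.
have /submxP [Z dE] := submx_trans dM Mu.
have dlE : dlsubmx M = Z *m ulsubmx M by rewrite /dlsubmx dE mulmx_lsub.
have drE : drsubmx M = Z *m ursubmx M by rewrite /drsubmx dE mulmx_rsub.
rewrite /schur_adj trmx_ursub MT dlE drE -(mulmxA Z) mul_mx_adj mul_mx_scalar.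
by rewrite -scalemxAl subrr.
Qed.

Section EvalSchurNullmx.
Variables (S : comNzRingType) (K : fieldType) (ev : {rmorphism S -> K}).
Variables (r k : nat) (M : 'M[S]_(r + k)).
Hypotheses (MT : M^T = M) (U0 : map_mx ev (schur_adj M) = 0).
Let W := schur_nullmx M.

Lemma ev_mul_schur_nullmx : map_mx ev M *m map_mx ev W = 0.
Proof. by rewrite -map_mxM mul_schur_nullmx // map_col_mx U0 map_mx0 col_mx0. Qed.

Lemma ev_tr_schur_nullmx_mul : (map_mx ev W)^T *m map_mx ev M = 0.
Proof.
by rewrite -[map_mx ev M]trmxK -trmx_mul map_trmx MT ev_mul_schur_nullmx trmx0.
Qed.

Variables (d : {additive S -> S}) (dM : derivation d).

Lemma ev_der_schur_adj :
  map_mx ev (map_mx d (\det (ulsubmx M) *: schur_adj M)) =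
  (map_mx ev W)^T *m map_mx ev (map_mx d M) *m map_mx ev W.
Proof.
rewrite -schur_nullmx_congr // !(map_mx_derM dM) !(map_mxD, map_mxM) -/W.
rewrite ev_mul_schur_nullmx mulmx0 add0r mulmxDr !mulmxA -map_trmx.
by rewrite ev_tr_schur_nullmx_mul mul0mx addr0.
Qed.

Hypotheses (det0 : ev (\det (ulsubmx M)) != 0)
  (dU0 : map_mx ev (map_mx d (\det (ulsubmx M) *: schur_adj M)) = 0).

Lemma ev_der_mul_schur_nullmx : map_mx ev (map_mx d (M *m W)) = 0.
Proof.
move: dU0; rewrite (map_mx_derZ dM) map_mxD !map_mxZ U0 scaler0 add0r => /eqP.
rewrite scalemx_eq0 (negPf det0) /= => /eqP dU0'.
have d0 : map_mx d (0 : 'M[S]_(r, k)) = 0 by apply/matrixP => i j; rewrite !mxE raddf0.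
by rewrite mul_schur_nullmx // !map_col_mx dU0' d0 map_mx0 col_mx0.
Qed.

Lemma ev_der2_schur_adj :
  map_mx ev (map_mx d (map_mx d (\det (ulsubmx M) *: schur_adj M))) =
  (map_mx ev W)^T *m map_mx ev (map_mx d (map_mx d M)) *m map_mx ev W
  + 2%:R *: ((map_mx ev W)^T *m map_mx ev (map_mx d M) *m map_mx ev (map_mx d W)).
Proof.
rewrite -schur_nullmx_congr // (map_mx_der2M dM) !map_mxD map_mxZ !map_mxM.
rewrite ev_mul_schur_nullmx ev_der_mul_schur_nullmx.
rewrite mulmx0 add0r mulmx0 scaler0 add0r (map_mx_der2M dM).
rewrite !map_mxD map_mxZ !map_mxM rmorph_nat !mulmxDr !mulmxA -map_trmx.
by rewrite ev_tr_schur_nullmx_mul mul0mx addr0 -scalemxAr mulmxA.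
Qed.

End EvalSchurNullmx.

Lemma qform_mx (S : comNzRingType) n (h : 'cV[S]_n) (F : 'I_n -> 'I_n -> S) :
  (h^T *m (\matrix_(i, j) F i j) *m h) 0 0 = \sum_i \sum_j h i 0 * h j 0 * F i j.
Proof.
rewrite mxE; under eq_bigr => j _ do rewrite mxE mulr_suml.
rewrite exchange_big; apply: eq_bigr => i _; apply: eq_bigr => j _.
by rewrite !mxE; ring.
Qed.

Section DirectionalDerivative.
Variables (R : realType) (n : nat).
Implicit Types (h : 'cV[R]_n) (u : 'I_n -> R).

Definition mdirderiv h (p : {mpoly R[n]}) : {mpoly R[n]} := \sum_i h i 0 *: mderiv i p.

Lemma mdirderiv_is_zmod_morphism h : zmod_morphism (mdirderiv h).
Proof.
by move=> p q; rewrite /mdirderiv -sumrB; apply: eq_bigr => i _; rewrite mderivB scalerBr.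
Qed.

HB.instance Definition _ h :=
  GRing.isZmodMorphism.Build {mpoly R[n]} {mpoly R[n]} (mdirderiv h)
    (mdirderiv_is_zmod_morphism h).

Lemma mdirderiv_derivation h : derivation (mdirderiv h).
Proof.
move=> p q; rewrite /mdirderiv mulr_suml mulr_sumr -big_split; apply: eq_bigr => i _.
by rewrite mderivM scalerDr -scalerAl -scalerAr.
Qed.

Lemma mderiv_derivation i : derivation (@mderiv n R i).
Proof. exact: mderivM. Qed.

Lemma Dmx_mdirderiv p (F : 'M[{mpoly R[n]}]_p) u h :
  Dmx F u h = evalmx u (map_mx (mdirderiv h) F).
Proof.
apply/matrixP => a b; rewrite /Dmx summxE !mxE /mdirderiv (big_morph _ (mevalD u) (meval0 u)).
by apply: eq_bigr => i _; rewrite !mxE mevalZ.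
Qed.

Lemma Dmx_tr p (F : 'M[{mpoly R[n]}]_p) u h : F^T = F -> (Dmx F u h)^T = Dmx F u h.
Proof. by move=> FT; rewrite Dmx_mdirderiv /evalmx !map_trmx FT. Qed.

Lemma evalmx_mdirderiv2 p (F : 'M[{mpoly R[n]}]_p) u h :
  evalmx u (map_mx (mdirderiv h) (map_mx (mdirderiv h) F)) =
  \sum_i \sum_j (h i 0 * h j 0) *: evalmx u (dmx j (dmx i F)).
Proof.
apply/matrixP => a b; rewrite summxE !mxE /mdirderiv (big_morph _ (mevalD u) (meval0 u)).
under [RHS]eq_bigr => i _ do rewrite summxE.
rewrite [RHS]exchange_big; apply: eq_bigr => j _.
rewrite mevalZ (big_morph _ (@mderivD n R j) (@mderiv0 n R j)).
rewrite (big_morph _ (mevalD u) (meval0 u)) mulr_sumr; apply: eq_bigr => i _.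
by rewrite !mxE mderivZ mevalZ mulrA [h j 0 * _]mulrC.
Qed.

Lemma hessL_qform p f (F : 'M[{mpoly R[n]}]_p) u (Q : 'M[R]_p) h :
  (h^T *m hessL f F u Q *m h) 0 0 = (h^T *m hess f u *m h) 0 0
    - frob Q (evalmx u (map_mx (mdirderiv h) (map_mx (mdirderiv h) F))).
Proof.
have entryB (A B : 'M[R]_1) : (A - B) 0 0 = A 0 0 - B 0 0 by rewrite !mxE.
rewrite /hessL mulmxBr mulmxBl entryB [in X in _ - X]qform_mx.
rewrite evalmx_mdirderiv2 frob_sumr.
congr (_ - _); apply: eq_bigr => i _.
by rewrite frob_sumr; apply: eq_bigr => j _; rewrite frobZr.
Qed.

Lemma Hterm_qform p (F : 'M[{mpoly R[n]}]_p) u (Q Fdag : 'M[R]_p) h :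
  (h^T *m Hterm F u Q Fdag *m h) 0 0 = 2 * frob Q (Dmx F u h *m Fdag *m Dmx F u h).
Proof.
rewrite /Hterm qform_mx /Dmx mulmx_suml mulmx_suml frob_sumr mulr_sumr.
apply: eq_bigr => i _; rewrite -!scalemxAl frobZr mulmx_sumr frob_sumr !mulr_sumr.
by apply: eq_bigr => j _; rewrite -scalemxAr frobZr; ring.
Qed.

Lemma Dmx_sandwich p d (F : 'M[{mpoly R[n]}]_p) u h (E : 'M[R]_(p, d)) :
  \sum_i h i 0 *: (E^T *m evalmx u (dmx i F) *m E) = E^T *m Dmx F u h *m E.
Proof.
rewrite /Dmx mulmx_sumr mulmx_suml; apply: eq_bigr => i _.
by rewrite -scalemxAr -scalemxAl.
Qed.

End DirectionalDerivative.

Lemma mul_tr_perm_mx (S : pzRingType) m (s : 'S_m) :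
  (perm_mx s)^T *m perm_mx s = 1%:M :> 'M[S]_m.
Proof. by rewrite tr_perm_mx -perm_mxM mulVg perm_mx1. Qed.

Lemma mul_perm_mx_tr (S : pzRingType) m (s : 'S_m) :
  perm_mx s *m (perm_mx s)^T = 1%:M :> 'M[S]_m.
Proof. by rewrite tr_perm_mx -perm_mxM mulgV perm_mx1. Qed.

Section SymPerm.
Variables (R : realType) (n m : nat) (s : 'S_m).
Implicit Type X : 'M[{mpoly R[n]}]_m.

Lemma map_symperm (g : {mpoly R[n]} -> {mpoly R[n]}) X :
  map_mx g (symperm s X) = symperm s (map_mx g X).
Proof. by apply/matrixP => i j; rewrite !mxE. Qed.

Lemma meval_symperm u X :
  map_mx (meval u) (symperm s X) = perm_mx s *m map_mx (meval u) X *m (perm_mx s)^T.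
Proof.
by rewrite tr_perm_mx -row_permE -col_permE; apply/matrixP => i j; rewrite !mxE.
Qed.

Lemma symperm_tr X : X^T = X -> (symperm s X)^T = symperm s X.
Proof. by move=> XT; apply/matrixP => i j; rewrite !mxE -[in RHS]XT mxE. Qed.

End SymPerm.

Lemma Tmx_schur_adj (R : realType) n r k (s : 'S_(r + k)) (G : 'M[{mpoly R[n]}]_(r + k)) :
  Tmx s G = \det (ulsubmx (symperm s G)) *: schur_adj (symperm s G).
Proof. by rewrite /Tmx /schur_adj scalerBr scalerA -expr2 !scalemxAl. Qed.

Lemma nondegeneracy_adj_eq0 (R : realType) n p d (G : 'M[{mpoly R[n]}]_p) u
    (E : 'M[R]_(p, d)) (Y : 'M[R]_d) :
  nondegeneracy_cond G u E -> Y^T = Y ->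
  Dmx_adj G u (E *m Y *m E^T) = 0 -> E *m Y *m E^T = 0.
Proof.
move=> nondeg YT adj0.
have ZT : (E *m Y *m E^T)^T = E *m Y *m E^T by rewrite !trmx_mul trmxK YT mulmxA.
have [dd [N [_ ENE0 ZE]]] := nondeg _ ZT.
apply: frob_self_eq0; rewrite {2}ZE frobDr /Dmx frob_sumr big1 ?add0r.
  by rewrite frobC -frob_sandwich ENE0 frobC frob0r.
move=> i _; rewrite frobZr frobC.
by move/matrixP: adj0 => /(_ i 0); rewrite !mxE => ->; rewrite mulr0.
Qed.

Lemma multiplier_compression (K : fieldType) m k (G0 Lam : 'M[K]_m)
    (V : 'M[K]_(m, k)) (L : 'M[K]_(k, m)) :
  (kermx G0^T <= V^T)%MS -> L *m V = 1%:M -> Lam^T = Lam -> G0 *m Lam = 0 ->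
  Lam = V *m (L *m Lam *m L^T) *m V^T.
Proof.
move=> KV LV LamT G0Lam.
have /submxP [Z LamZ] : (Lam <= V^T)%MS.
  by apply: submx_trans KV; rewrite sub_kermx -[Lam]LamT -trmx_mul G0Lam trmx0.
have VLLam : V *m L *m Lam = Lam.
  by rewrite -LamT LamZ trmx_mul trmxK mulmxA -(mulmxA V) LV mulmx1.
rewrite !mulmxA VLLam -mulmxA -trmx_mul -[in X in X *m _]LamT -trmx_mul.
by rewrite VLLam LamT.
Qed.

Lemma linv_sandwich_eq0 (K : fieldType) m k (V : 'M[K]_(m, k)) (L : 'M[K]_(k, m))
    (Y : 'M[K]_k) :
  L *m V = 1%:M -> V *m Y *m V^T = 0 -> Y = 0.
Proof.
move=> LV VYV0; have : L *m (V *m Y *m V^T) *m L^T = Y.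
  by rewrite !mulmxA LV mul1mx -mulmxA -trmx_mul LV trmx1 mulmx1.
by rewrite VYV0 mulmx0 mul0mx.
Qed.

Lemma unitmx_rank_sandwich (K : fieldType) m k (A : 'M[K]_(m, k)) (M : 'M[K]_k)
    (B : 'M[K]_(k, m)) :
  \rank (A *m M *m B) = k -> M \in unitmx.
Proof.
move=> rkAMB; rewrite -row_free_unit /row_free eqn_leq rank_leq_row /=.
rewrite -[X in (X <= _)%N]rkAMB.
exact: leq_trans (mxrankM_maxl _ B) (mxrankM_maxr A M).
Qed.

HB.lock Definition Tmx_kerbasis (R : realType) n r k (G : 'M[{mpoly R[n]}]_(r + k))
    (u : 'I_n -> R) (s : 'S_(r + k)) : 'M[R]_(r + k, k) :=
  (perm_mx s)^T *m evalmx u (schur_nullmx (symperm s G)).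

Section Reduction.
Variables (R : realType) (n r k : nat) (G : 'M[{mpoly R[n]}]_(r + k)).
Variables (u : 'I_n -> R) (s : 'S_(r + k)).
Hypotheses (GT : G^T = G) (rkG : \rank (evalmx u G) = r)
  (rkA : \rank (evalmx u (ulsubmx (symperm s G))) = r).

Local Notation Gp := (symperm s G).
Local Notation P := (perm_mx s : 'M[R]_(r + k)).
Local Notation T := (Tmx s G).

Local Notation V := (Tmx_kerbasis G u s).

Let kerbasisE : V = P^T *m map_mx (meval u) (schur_nullmx Gp).
Proof. by rewrite Tmx_kerbasis.unlock. Qed.

Let GpT : Gp^T = Gp := symperm_tr s GT.

Let det_ulsubmx_neq0 : meval u (\det (ulsubmx Gp)) != 0.
Proof.
have Au : ulsubmx (evalmx u Gp) \in unitmx.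
  by rewrite -row_free_unit /row_free -map_ulsubmx rkA.
by rewrite -det_map_mx map_ulsubmx -unitfE -unitmxE.
Qed.

Let evalmx_schur_adj : map_mx (meval u) (schur_adj Gp) = 0.
Proof.
rewrite /schur_adj map_mxB map_mxZ !map_mxM -map_trmx map_mx_adj.
rewrite -det_map_mx map_ulsubmx map_ursubmx map_drsubmx -[_ *: _ - _]/(schur_adj _).
apply: schur_adj_eq0; first by rewrite map_trmx GpT.
  rewrite -[RHS]rkG meval_symperm mxrankMfree ?eqmxMfull ?row_free_unit ?row_full_unit
     ?unitmx_tr ?unitmx_perm //.
by rewrite -row_free_unit /row_free -map_ulsubmx rkA.
Qed.

Lemma evalmx_Tmx : evalmx u T = 0.
Proof. by rewrite Tmx_schur_adj /evalmx map_mxZ evalmx_schur_adj scaler0. Qed.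

Lemma mul_evalmx_Tmx_kerbasis : evalmx u G *m V = 0.
Proof.
rewrite kerbasisE /evalmx mulmxA.
have -> : map_mx (meval u) G *m P^T = P^T *m map_mx (meval u) Gp.
  by rewrite meval_symperm !mulmxA mul_tr_perm_mx mul1mx.
by rewrite -mulmxA (ev_mul_schur_nullmx GpT evalmx_schur_adj) mulmx0.
Qed.

Lemma Tmx_kerbasis_linv : exists L : 'M[R]_(k, r + k), L *m V = 1%:M.
Proof.
exists (row_mx (0 : 'M_(k, r)) (meval u (\det (ulsubmx Gp)))^-1%:M *m P).
rewrite kerbasisE -mulmxA (mulmxA P) mul_perm_mx_tr mul1mx /evalmx /schur_nullmx.
by rewrite map_col_mx map_scalar_mx mul_row_col mul0mx add0r -scalar_mxM mulVf.
Qed.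

Lemma Tmx_kerbasis_kermx : (V^T == kermx (evalmx u G)^T)%MS.
Proof.
have [L LV] := Tmx_kerbasis_linv.
have VK : (V^T <= kermx (evalmx u G)^T)%MS.
  by rewrite sub_kermx -trmx_mul mul_evalmx_Tmx_kerbasis trmx0.
have rkV : \rank V^T = k.
  rewrite mxrank_tr; apply/eqP; rewrite eqn_leq rank_leq_col /=.
  by rewrite -[X in (X <= _)%N](mxrank1 R k) -LV mxrankM_maxr.
by rewrite -(mxrank_leqif_eq VK).2 rkV mxrank_ker mxrank_tr rkG addKn.
Qed.

Section Derivation.
Variables (d : {additive {mpoly R[n]} -> {mpoly R[n]}}) (dM : derivation d).

Let meval_sandwich X (Y : 'M[R]_(r + k, k)) :
  (map_mx (meval u) (schur_nullmx Gp))^T *m map_mx (meval u) (symperm s X) *m Y =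
  V^T *m evalmx u X *m (P^T *m Y).
Proof. by rewrite meval_symperm kerbasisE trmx_mul trmxK !mulmxA. Qed.

Lemma evalmx_der_Tmx : evalmx u (map_mx d T) = V^T *m evalmx u (map_mx d G) *m V.
Proof.
rewrite /evalmx Tmx_schur_adj (ev_der_schur_adj GpT evalmx_schur_adj dM).
by rewrite map_symperm meval_sandwich -kerbasisE.
Qed.

Lemma evalmx_der2_Tmx : evalmx u (map_mx d T) = 0 ->
  exists Q : 'M[R]_(r + k, k),
    evalmx u (map_mx d G) *m V = - (evalmx u G *m Q) /\
    evalmx u (map_mx d (map_mx d T)) =
      V^T *m evalmx u (map_mx d (map_mx d G)) *m V - 2%:R *: (Q^T *m evalmx u G *m Q).
Proof.
rewrite /evalmx Tmx_schur_adj => dT0.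
pose Q := P^T *m map_mx (meval u) (map_mx d (schur_nullmx Gp)).
pose DG := map_mx (meval u) (map_mx d G); pose G0 := map_mx (meval u) G.
have DGT : DG^T = DG by rewrite /DG !map_trmx GT.
have G0T : G0^T = G0 by rewrite /G0 map_trmx GT.
have DGV : DG *m V = - (G0 *m Q).
  apply/eqP; rewrite -subr_eq0 opprK.
  have -> : DG *m V + G0 *m Q = P^T *m map_mx (meval u) (map_mx d (Gp *m schur_nullmx Gp)).
    rewrite (map_mx_derM dM) map_mxD !map_mxM map_symperm !meval_symperm.
    by rewrite kerbasisE /Q mulmxDr !mulmxA mul_tr_perm_mx !mul1mx.
  by rewrite (ev_der_mul_schur_nullmx GpT evalmx_schur_adj dM det_ulsubmx_neq0 dT0) mulmx0.
have VDG : V^T *m DG = - (Q^T *m G0).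
  by rewrite -DGT -trmx_mul DGV raddfN /= trmx_mul G0T.
exists Q; split=> //.
rewrite (ev_der2_schur_adj GpT evalmx_schur_adj dM det_ulsubmx_neq0 dT0).
by rewrite !map_symperm !meval_sandwich -kerbasisE -/DG -/Q VDG mulNmx scalerN.
Qed.

End Derivation.

Lemma Dmx_adj_Tmx Y : Dmx_adj T u Y = Dmx_adj G u (V *m Y *m V^T).
Proof.
apply/matrixP => i j; rewrite !mxE /dmx (evalmx_der_Tmx (mderiv_derivation i)).
exact: frob_sandwich.
Qed.

Lemma Dmx_Tmx h : Dmx T u h = V^T *m Dmx G u h *m V.
Proof. by rewrite !Dmx_mdirderiv (evalmx_der_Tmx (mdirderiv_derivation h)). Qed.

Lemma Dmx_adj_Tmx_inj d (E : 'M[R]_(r + k, d)) :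
  nondegeneracy_cond G u E -> (V^T <= E^T)%MS ->
  forall Y, Y^T = Y -> Dmx_adj T u Y = 0 -> Y = 0.
Proof.
move=> nondeg /submxP[Z VZ] Y YT adj0.
have VYV : V *m Y *m V^T = E *m (Z^T *m Y *m Z) *m E^T.
  by rewrite -[V]trmxK VZ !trmx_mul !trmxK !mulmxA.
have YZT : (Z^T *m Y *m Z)^T = Z^T *m Y *m Z by rewrite !trmx_mul trmxK YT mulmxA.
have VYV0 : V *m Y *m V^T = 0.
  by rewrite VYV; apply: nondegeneracy_adj_eq0 nondeg YZT _; rewrite -VYV -Dmx_adj_Tmx.
have [L LV] := Tmx_kerbasis_linv.
exact: linv_sandwich_eq0 LV VYV0.
Qed.

Lemma SOSC_Tmx f d (E : 'M[R]_(r + k, d)) (Lam Gd : 'M[R]_(r + k)) (Theta : 'M[R]_k) :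
  SOSC f G u Lam E Gd -> evalmx u G *m Gd *m evalmx u G = evalmx u G ->
  (E^T <= V^T)%MS -> Lam = V *m Theta *m V^T ->
  forall h, h != 0 -> Dmx T u h = 0 -> 0 < (h^T *m hessL f T u Theta *m h) 0 0.
Proof.
move=> sosc MP /submxP[Z EZ] LamE h h_neq0 DTh0.
have dT0 : evalmx u (map_mx (mdirderiv h) T) = 0 by rewrite -Dmx_mdirderiv.
have [Q [DGV D2T]] := evalmx_der2_Tmx (mdirderiv_derivation h) dT0.
rewrite -Dmx_mdirderiv in DGV.
have VDG : V^T *m Dmx G u h = - (Q^T *m evalmx u G).
  rewrite -(Dmx_tr _ _ GT) -trmx_mul DGV raddfN /= trmx_mul.
  by rewrite /evalmx map_trmx GT.
have crit : \sum_i h i 0 *: (E^T *m evalmx u (dmx i G) *m E) = 0.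
  rewrite Dmx_sandwich -[E]trmxK EZ !trmx_mul !trmxK.
  by rewrite mulmxA -(mulmxA Z) -(mulmxA Z) -Dmx_Tmx DTh0 mulmx0 mul0mx.
have D2 : frob Theta (V^T *m evalmx u (map_mx (mdirderiv h) (map_mx (mdirderiv h) G)) *m V)
    = frob Lam (evalmx u (map_mx (mdirderiv h) (map_mx (mdirderiv h) G))).
  by rewrite frobC frob_sandwich -LamE frobC.
(* H(u, Lam) is exactly the curvature term -2 Q^T G(u) Q of the second derivative of T *)
have H : frob Lam (Dmx G u h *m Gd *m Dmx G u h) = frob Theta (Q^T *m evalmx u G *m Q).
  rewrite LamE frobC -frob_sandwich frobC; congr frob.
  transitivity ((V^T *m Dmx G u h) *m Gd *m (Dmx G u h *m V)); first by rewrite !mulmxA.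
  by rewrite VDG DGV !(mulNmx, mulmxN) opprK -[in RHS]MP !mulmxA.
have entryD (A B : 'M[R]_1) : (A + B) 0 0 = A 0 0 + B 0 0 by rewrite mxE.
move: (sosc h h_neq0 crit); rewrite mulmxDr mulmxDl entryD !hessL_qform Hterm_qform.
by rewrite D2T frobDr frobNr frobZr D2 H; lra.
Qed.

End Reduction.

Theorem proposition4p2 (R : realType) (n r k : nat)
  (f : {mpoly R[n]}) (G : 'M[{mpoly R[n]}]_(r + k)) (u : 'I_n -> R)
  (s : 'S_(r + k)) (d : nat) (E : 'M[R]_(r + k, d)) :
  trmx G = G ->
  is_minimizer f G u ->
  ker_basis (evalmx u G) E ->
  \rank (evalmx u G) = r ->
  \rank (evalmx u (ulsubmx (symperm s G))) = r ->
  nondegeneracy_cond G u E ->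
  (exists (Lam Gdag : 'M[R]_(r + k)),
      [/\ KKT f G u Lam, strict_compl G u Lam,
          is_MP_inverse (evalmx u G) Gdag & SOSC f G u Lam E Gdag]) ->
  let T := Tmx s G in
  exists Theta : 'M[R]_k,
    [/\ trmx Theta = Theta,
        grad f u - Dmx_adj T u Theta = 0,
        psd Theta, psd (evalmx u T) &
        frob Theta (evalmx u T) = 0] /\
    [/\ (forall Y : 'M[R]_k, trmx Y = Y -> Dmx_adj T u Y = 0 -> Y = 0),
        pd Theta &
        (forall h : 'cV[R]_n, h != 0 -> Dmx T u h = 0 ->
           0 < (trmx h *m hessL f T u Theta *m h) 0 0)].
Proof.
move=> GT _ [_ Eker] rkG rkA nondeg [Lam [Gd [[LamT gradL psdLam psdG cmpl] sc [MP _ _ _] sosc]]] T.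
set V := Tmx_kerbasis G u s.
have [L LV] := Tmx_kerbasis_linv rkA.
have kerV := Tmx_kerbasis_kermx GT rkG rkA; have /andP[_ KV] := kerV.
have /andP[EV VE] : (E^T == V^T)%MS.
  exact/eqmxP/(eqmx_trans (eqmxP Eker))/eqmx_sym/eqmxP/kerV.
have LamE := multiplier_compression KV LV LamT (psd_frob_eq0_mul psdLam psdG cmpl).
exists (L *m Lam *m L^T); split; first split.
- by rewrite !trmx_mul trmxK LamT mulmxA.
- by rewrite Dmx_adj_Tmx // -LamE.
- exact: psd_congr.
- by rewrite evalmx_Tmx //; exact: psd0.
- by rewrite evalmx_Tmx // frob0r.
split.
- exact: Dmx_adj_Tmx_inj nondeg VE.
- apply: psd_unitmx_pd; first exact: psd_congr.
  apply: (@unitmx_rank_sandwich _ _ _ V _ V^T); rewrite -LamE.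
  by move: sc; rewrite /strict_compl rkG => /addnI.
- exact: SOSC_Tmx sosc MP EV LamE.
Qed.
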